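(* Let $k$ be a field, $A=kQ_A/I_A$ a monomial algebra with vertices $e_1,\dots,e_n$, and $B$ the algebra obtained from $A$ by gluing the distinct non-isolated vertices $e_1,e_n$. Then $$\dim_k\mathrm{Im}(\delta^0_A)=\dim_k\mathrm{Im}(\delta^0_B)+1+c_B-c_A-\mathrm{sp}(1,n).$$ In particular, if $e_1,e_n$ lie in the same block of $A$, then $\dim_k\mathrm{Im}(\delta^0_A)=\dim_k\mathrm{Im}(\delta^0_B)+1-\mathrm{sp}(1,n)$; if they lie in different blocks, then $\dim_k\mathrm{Im}(\delta^0_A)=\dim_k\mathrm{Im}(\delta^0_B)$.
   Context: Monomial algebra: $A=kQ_A/I_A$, $Q_A$ finite quiver, $I_A$ admissible, generated by a minimal set $Z_A$ of paths of length $\ge2$; $\mathcal B_A$: paths (including trivial ones) avoiding $Z_A$ as subpaths, a basis of $A$. Gluing: $B\subseteq A$ generated by $f_1=e_1+e_n$, $f_i=e_i$ ($2\le i\le n-1$) and all arrows; $B\cong kQ_B/I_B$, $Q_B$ obtained from $Q_A$ by identifying $e_1,e_n$ to $f_1$ (arrow $\alpha\mapsto\alpha^*$, path $p=a_m\cdots a_1\mapsto p^*=a_m^*\cdots a_1^*$), $I_B$ generated by $\{r^*:r\in Z_A\}$ and the paths $b^*c^*$ with $b,c$ arrows, $t(c),s(b)\in\{e_1,e_n\}$, $t(c)\ne s(b)$; $\mathcal B_B$ its basis paths. $c_A,c_B$: numbers of connected components of $Q_A,Q_B$; blocks correspond to connected components. For path sets $X,Y$, $k(X\|Y)$ has basis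 the pairs $x\|y$ of parallel paths. For monomial $\Lambda=kQ/\langle Z\rangle$ with basis paths $\mathcal B$, $\delta^0:k(Q_0\|\mathcal B)\to k(Q_1\|\mathcal B)$, $e\|\gamma\mapsto\sum_{a\in Q_1,s(a)=e,a\gamma\in\mathcal B}a\|a\gamma-\sum_{a\in Q_1,t(a)=e,\gamma a\in\mathcal B}a\|\gamma a$; $\delta^0_A,\delta^0_B$ are these for $A,B$. A special path is a path $p\in\mathcal B_A$ from $e_1$ to $e_n$ or from $e_n$ to $e_1$ with $\delta^0_B(f_1\|p^* )\ne0$, equivalently such that $ap\notin I_A$ or $pa\notin I_A$ for some arrow $a$; $\mathrm{sp}(1,n)$ is the number of special paths. *)

From HB Require Import structures.
From mathcomp Require Import all_boot all_order all_algebra.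
Set Implicit Arguments. Unset Strict Implicit. Unset Printing Implicit Defensive.
Import GRing.Theory.

(* A finite quiver is given by a finite type of vertices V, a predicate Q0
   selecting the actual vertex set, a finite type of arrows E and
   source/target maps s t : E -> V.
   A path is a pair (v, w) : V * seq E where v is its source and
   w = [:: a_1; ...; a_m] lists its arrows IN TRAVERSAL ORDER
   (so it is the path a_m ... a_1 in the paper's notation);
   (v, [::]) is the trivial path e_v. *)

Section Quiver.
Variables (V E : finType) (s t : E -> V).

Fixpoint chain (x : V) (w : seq E) : bool :=
  if w is a :: w' then (s a == x) && chain (t a) w' else true.

Definition src (p : V * seq E) : V := p.1.
Definition tgt (p : V * seq E) : V := last p.1 (map t p.2).

Definition valid (Q0 : pred V) (p : V * seq E) : bool :=
  (p.1 \in Q0) && chain p.1 p.2.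

Definition word_path (w : seq E) : bool :=
  if w is a :: _ then chain (s a) w else false.

Definition avoids (Z : seq (seq E)) (w : seq E) : bool :=
  all (fun r => ~~ infix r w) Z.

(* basis paths B of the monomial algebra kQ/<Z> *)
Definition basisp (Q0 : pred V) (Z : seq (seq E)) (p : V * seq E) : bool :=
  valid Q0 p && avoids Z p.2.

Definition monomial_relations (Z : seq (seq E)) : Prop :=
  (forall r, r \in Z -> (2 <= size r)%N /\ word_path r) /\
  (forall r r', r \in Z -> r' \in Z -> infix r r' -> r = r').

Definition bounded (Q0 : pred V) (Z : seq (seq E)) (N : nat) : Prop :=
  forall p, valid Q0 p -> (N < size p.2)%N -> ~~ avoids Z p.2.

Fixpoint words (N : nat) : seq (seq E) :=
  if N is N'.+1 then [::] :: [seq a :: w | a <- enum E, w <- words N']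
  else [:: [::]].

(* basis paths of length <= N (all basis paths when N is a bound) *)
Definition basis_list (Q0 : pred V) (Z : seq (seq E)) (N : nat) :=
  [seq p <- [seq (v, w) | v <- enum V, w <- words N] | basisp Q0 Z p].

(* basis of k(Q0 || B): e || gamma, gamma a basis path from e to e
   (represented by gamma) *)
Definition dom_list Q0 Z N :=
  [seq g <- basis_list Q0 Z N | tgt g == src g].

(* basis of k(Q1 || B): a || p with p a basis path parallel to a *)
Definition codom_list Q0 Z N :=
  [seq (a, p) | a <- enum E,
     p <- [seq q <- basis_list Q0 Z N | (src q == s a) && (tgt q == t a)]].

(* coefficient of a || p in delta^0(e || gamma), e = src gamma:
   + [a gamma = p] (s(a) = e) - [gamma a = p] (t(a) = e).
   Here "a gamma" (gamma then a) is (src gamma, rcons gamma a) and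
   "gamma a" (a then gamma) is (s a, a :: gamma). The conditions
   a gamma \in B, gamma a \in B are automatic since p is a basis path. *)
Definition coef (k : fieldType) (g : V * seq E) (ap : E * (V * seq E)) : k :=
  ((s ap.1 == src g) && (ap.2 == (src g, rcons g.2 ap.1)))%:R
  - ((t ap.1 == src g) && (ap.2 == (s ap.1, ap.1 :: g.2)))%:R.

Definition delta0_mx (k : fieldType) Q0 Z N :
  'M[k]_(size (dom_list Q0 Z N), size (codom_list Q0 Z N)) :=
  \matrix_(i, j) coef k (tnth (in_tuple (dom_list Q0 Z N)) i)
                        (tnth (in_tuple (codom_list Q0 Z N)) j).

Definition dimIm_delta0 (k : fieldType) Q0 Z N : nat :=
  \rank (delta0_mx k Q0 Z N).

Definition adj : rel V :=
  fun u v => [exists a, ((s a == u) && (t a == v)) || ((s a == v) && (t a == u))].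

Definition ncomp (Q0 : pred V) : nat := n_comp adj Q0.

Definition non_isolated (v : V) : Prop := exists a, (s a == v) || (t a == v).

End Quiver.

Section Gluing.
Variables (V E : finType) (s t : E -> V) (Z : seq (seq E)) (v1 vn : V).

Definition glue (v : V) : V := if v == vn then v1 else v.
Definition sB (a : E) : V := glue (s a).
Definition tB (a : E) : V := glue (t a).
(* vertices of Q_B: all except vn (vn is identified with v1 = f_1) *)
Definition Q0B : pred V := predC1 vn.
Definition Q0A : pred V := predT.

(* generators of I_B: the r^star and the b^star c^star (c first, then b) with
   t(c), s(b) in {v1, vn}, t(c) <> s(b) *)
Definition ZB : seq (seq E) :=
  Z ++ [seq [:: c; b] | c <- enum E,
          b <- [seq b <- enum E | (t c \in [:: v1; vn]) && (s b \in [:: v1; vn])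
                                  && (t c != s b)]].

(* special paths: p in B_A from v1 to vn or from vn to v1 with
   delta^0_B (f_1 || p^star) <> 0 *)
Definition special (k : fieldType) (N : nat) (p : V * seq E) : bool :=
  basisp s t Q0A Z p &&
  (((src p == v1) && (tgt t p == vn)) || ((src p == vn) && (tgt t p == v1))) &&
  has (fun ap => coef sB tB k (v1, p.2) ap != 0%R) (codom_list sB tB Q0B ZB N).

Definition sp (k : fieldType) (N : nat) : nat :=
  count (special k N) (basis_list s t Q0A Z N).

End Gluing.

From HB Require Import structures.
From mathcomp Require Import all_boot all_order all_algebra zify.
Set Implicit Arguments. Unset Strict Implicit. Unset Printing Implicit Defensive.
Import GRing.Theory.

Local Open Scope ring_scope.

(* The matrix of delta^0 in the bases e||gamma and a||p is block diagonal: the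
   rows e_v||e_v only meet the columns a||p with p an arrow, the other rows only
   the columns with |p| >= 2.  The first block is the transposed incidence
   matrix of the underlying graph, of rank #vertices - #components.  In the
   second block, gluing turns the rows and columns of A into rows and columns
   of B with the same entries; the remaining rows of B are the f_1||p^* with p
   a path between e_1 and e_n, such a row is nonzero iff p is special, and its
   nonzero entries lie in columns meeting no other row.  So this block gains
   rank sp(1,n).  Finally gluing removes one vertex and merges the components
   of e_1 and e_n. *)

(** * Rank of matrices indexed by lists *)

Section ListMatrix.
Variable k : fieldType.

Definition mx_of (X Y : Type) (f : X -> Y -> k) (r : seq X) (c : seq Y) :
    'M[k]_(size r, size c) :=
  \matrix_(i, j) f (tnth (in_tuple r) i) (tnth (in_tuple c) j).

Definition row_of (X Y : Type) (f : X -> Y -> k) (c : seq Y) (x : X) :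
    'rV[k]_(size c) :=
  \row_j f x (tnth (in_tuple c) j).

Definition rows_among (X X' Y : eqType) (f : X -> Y -> k) (r : seq X)
    (f' : X' -> Y -> k) (r' : seq X') (c : seq Y) :=
  forall x, x \in r ->
    {in c, forall y, f x y = 0} \/ exists2 x', x' \in r' & {in c, f x =1 f' x'}.

Lemma row_mx_of (X Y : Type) (f : X -> Y -> k) r c i :
  row i (mx_of f r c) = row_of f c (tnth (in_tuple r) i).
Proof. by apply/rowP => j; rewrite !mxE. Qed.

Lemma trmx_mx_of (X Y : Type) (f : X -> Y -> k) r c :
  (mx_of f r c)^T = mx_of (fun y x => f x y) c r.
Proof. by apply/matrixP => i j; rewrite !mxE. Qed.

Lemma row_of_sub (X : eqType) (Y : Type) (f : X -> Y -> k) r c x :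
  x \in r -> (row_of f c x <= mx_of f r c)%MS.
Proof.
move=> xr; have /tnthP [i ->] : x \in in_tuple r by [].
by rewrite -row_mx_of row_sub.
Qed.

Lemma mx_of_subset_rows (X : eqType) (Y : Type) (f : X -> Y -> k) r r' c :
  {subset r' <= r} -> (mx_of f r' c <= mx_of f r c)%MS.
Proof.
by move=> sub; apply/row_subP => i; rewrite row_mx_of row_of_sub ?sub ?mem_tnth.
Qed.

Lemma mx_of_sub_rows (X X' Y : eqType) (f : X -> Y -> k) (f' : X' -> Y -> k)
    r r' c :
  rows_among f r f' r' c -> (mx_of f r c <= mx_of f' r' c)%MS.
Proof.
move=> among; apply/row_subP => i; rewrite row_mx_of.
have [f0 | [x' x'r ff']] := among _ (mem_tnth i (in_tuple r)).
  suff -> : row_of f c (tnth (in_tuple r) i) = 0 by rewrite sub0mx.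
  by apply/rowP => j; rewrite !mxE f0 ?mem_tnth.
suff -> : row_of f c (tnth (in_tuple r) i) = row_of f' c x' by exact: row_of_sub.
by apply/rowP => j; rewrite !mxE ff' ?mem_tnth.
Qed.

Lemma rank_mx_of_rows (X X' Y : eqType) (f : X -> Y -> k) (f' : X' -> Y -> k)
    r r' c :
  rows_among f r f' r' c -> rows_among f' r' f r c ->
  \rank (mx_of f r c) = \rank (mx_of f' r' c).
Proof.
by move=> sub1 sub2; apply/eqmx_rank; rewrite !mx_of_sub_rows.
Qed.

Lemma rank_mx_of_cols (X Y Y' : eqType) (f : X -> Y -> k) (f' : X -> Y' -> k)
    r c c' :
  rows_among (fun y x => f x y) c (fun y x => f' x y) c' r ->
  rows_among (fun y x => f' x y) c' (fun y x => f x y) c r ->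
  \rank (mx_of f r c) = \rank (mx_of f' r c').
Proof.
move=> sub1 sub2; rewrite -mxrank_tr trmx_mx_of -[RHS]mxrank_tr trmx_mx_of.
exact: rank_mx_of_rows.
Qed.

Lemma rank_mx_of_subset_cols (X Y : eqType) (f : X -> Y -> k) r c c' :
  {subset c' <= c} -> (\rank (mx_of f r c') <= \rank (mx_of f r c))%N.
Proof.
move=> sub; rewrite -mxrank_tr trmx_mx_of -[X in (_ <= X)%N]mxrank_tr.
by rewrite trmx_mx_of mxrankS ?mx_of_subset_rows.
Qed.

Lemma rank_mx_of_filter_rows (X Y : eqType) (f : X -> Y -> k) (P : pred X)
    r c :
  (forall x, x \in r -> ~~ P x -> {in c, forall y, f x y = 0}) ->
  \rank (mx_of f r c) = \rank (mx_of f (filter P r) c).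
Proof.
move=> f0; apply/eqmx_rank/andP; split; last first.
  exact/mx_of_subset_rows/mem_subseq/filter_subseq.
apply: mx_of_sub_rows => x xr.
have [Px | nPx] := boolP (P x); last by left; apply: f0.
by right; exists x; rewrite ?mem_filter ?Px.
Qed.

Lemma rank_mx_of_filter_cols (X Y : eqType) (f : X -> Y -> k) (Q : pred Y)
    r c :
  (forall y, y \in c -> ~~ Q y -> {in r, forall x, f x y = 0}) ->
  \rank (mx_of f r c) = \rank (mx_of f r (filter Q c)).
Proof.
move=> f0; rewrite -mxrank_tr trmx_mx_of -[RHS]mxrank_tr trmx_mx_of.
exact: rank_mx_of_filter_rows.
Qed.

Lemma mx_of_filterC_eqmx (X : eqType) (Y : Type) (f : X -> Y -> k)
    (P : pred X) r c :
  (mx_of f r c == mx_of f (filter P r) c + mx_of f (filter (predC P) r) c)%MS.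
Proof.
have sub_r (P' : pred X) : {subset filter P' r <= r}.
  exact/mem_subseq/filter_subseq.
rewrite addsmx_sub !mx_of_subset_rows // !andbT.
apply/row_subP => i; rewrite row_mx_of; set x := tnth _ i.
have xr : x \in r by exact: mem_tnth.
have [Px | nPx] := boolP (P x).
  by rewrite (submx_trans _ (addsmxSl _ _)) // row_of_sub // mem_filter Px.
by rewrite (submx_trans _ (addsmxSr _ _)) // row_of_sub // mem_filter /= nPx.
Qed.

Lemma capmx_eq0_proj m1 m2 n (A : 'M[k]_(m1, n)) (B : 'M[k]_(m2, n))
    (D : 'M[k]_n) :
  A *m D = A -> B *m D = 0 -> (A :&: B)%MS = 0.
Proof.
move=> AD BD; apply/eqP; rewrite -submx0; apply/rV_subP => v.
rewrite sub_capmx => /andP[/submxP [u1 ->] /submxP [u2 e12]].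
by rewrite -AD mulmxA e12 -mulmxA BD mulmx0 sub0mx.
Qed.

Lemma rank_mx_of_block (X Y : eqType) (f : X -> Y -> k) (P : pred X)
    (Q : pred Y) r c :
  (forall x y, x \in r -> y \in c -> P x != Q y -> f x y = 0) ->
  \rank (mx_of f r c) =
    (\rank (mx_of f (filter P r) (filter Q c)) +
     \rank (mx_of f (filter (predC P) r) (filter (predC Q) c)))%N.
Proof.
move=> f0.
set A := mx_of f (filter P r) c; set B := mx_of f (filter (predC P) r) c.
(* Projecting onto the [Q]-columns separates the row spaces of [A] and [B]. *)
set D := diag_mx (\row_j (Q (tnth (in_tuple c) j))%:R : 'rV[k]_(size c)).
have in_r (P' : pred X) i : tnth (in_tuple (filter P' r)) i \in r.
  by have := mem_tnth i (in_tuple (filter P' r)); rewrite mem_filter => /andP[].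
have AD : A *m D = A.
  apply/matrixP => i j; rewrite mul_mx_diag !mxE.
  have [_ | nQ] := boolP (Q _); first by rewrite mulr1.
  have := mem_tnth i (in_tuple (filter P r)); rewrite mem_filter => /andP[Px _].
  by rewrite mulr0 f0 ?in_r ?mem_tnth ?Px ?(negbTE nQ).
have BD : B *m D = 0.
  apply/matrixP => i j; rewrite mul_mx_diag !mxE.
  have [Qy | _] := boolP (Q _); last by rewrite mulr0.
  have := mem_tnth i (in_tuple (filter (predC P) r)).
  rewrite mem_filter => /andP[/negbTE nPx _].
  by rewrite mulr1 f0 ?in_r ?mem_tnth ?nPx ?Qy.
rewrite (eqmx_rank (mx_of_filterC_eqmx f P r c)).
rewrite mxrank_disjoint_sum ?(capmx_eq0_proj AD BD) //.
congr (_ + _)%N; apply: rank_mx_of_filter_cols => y yc nQ x;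
  rewrite mem_filter => /andP[Px xr]; apply: f0 => //.
  by rewrite Px (negbTE nQ).
by move: Px nQ; rewrite /= negbK => /negbTE -> ->.
Qed.

Lemma rank_mx_of_row (X : Type) (Y : eqType) (f : X -> Y -> k) x c :
  \rank (mx_of f [:: x] c) = has (fun y => f x y != 0) c.
Proof.
rewrite rank_rV; congr (nat_of_bool _).
apply/idP/idP => [/matrix0Pn [i [j]] | /hasP [y yc nz]].
  rewrite mxE (ord1 i) => nz.
  by apply/hasP; exists (tnth (in_tuple c) j); first exact: mem_tnth.
have /tnthP [j ej] : y \in in_tuple c by [].
by apply/matrix0Pn; exists ord0, j; rewrite mxE -ej.
Qed.

Lemma rank_mx_of_sparse_cols (X Y : eqType) (f : X -> Y -> k) r c :
  uniq r ->
  (forall y, y \in c -> {in r &, forall x1 x2,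
     f x1 y != 0 -> f x2 y != 0 -> x1 = x2}) ->
  \rank (mx_of f r c) = count (fun x => has (fun y => f x y != 0) c) r.
Proof.
elim: r c => [|x r IH] c; first by move=> _ _; apply/eqP; rewrite -leqn0 rank_leq_row.
move=> /andP[xr ur] sparse.
have sparse_x y z : y \in c -> z \in r -> f x y != 0 -> f z y = 0.
  move=> yc zr nzx; apply/eqP; apply: contraNT xr => nzz.
  by rewrite (sparse y yc x z) ?mem_head ?inE ?zr ?orbT.
rewrite (rank_mx_of_block (P := pred1 x) (Q := fun y => f x y != 0)); last first.
  move=> z y; rewrite inE => /predU1P [-> | zr] yc /=.
    by rewrite eqxx /= negbK => /eqP.
  have -> : (z == x) = false by apply: contraNF xr => /eqP <-.
  by move=> /negPn; exact: sparse_x.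
have -> : filter (pred1 x) (x :: r) = [:: x].
  rewrite /= eqxx (eq_in_filter (a2 := pred0)) ?filter_pred0 //.
  by move=> z zr /=; apply: contraNF xr => /eqP <-.
have -> : filter (predC (pred1 x)) (x :: r) = r.
  rewrite /= eqxx /= (eq_in_filter (a2 := predT)) ?filter_predT //.
  by move=> z zr /=; apply: contraNN xr => /eqP <-.
rewrite rank_mx_of_row IH //=; last first.
  move=> y; rewrite mem_filter => /andP[_ yc] z1 z2 z1r z2r.
  by apply: sparse; rewrite ?inE ?z1r ?z2r ?orbT.
congr (_ + _)%N; first by rewrite !has_filter filter_id.
apply: eq_in_count => z zr /=.
apply/hasP/hasP => [[y] | [y yc nz]].
  by rewrite mem_filter => /andP[_ yc]; exists y.
exists y => //; rewrite mem_filter yc andbT /=.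
by apply: contraNN nz => nzx; rewrite (sparse_x y z yc zr nzx).
Qed.

End ListMatrix.

(** * The two blocks of delta^0 *)

Definition trivial_path (V E : eqType) (p : V * seq E) : bool := p.2 == [::].
Definition arrow_col (V E : eqType) (y : E * (V * seq E)) : bool :=
  size y.2.2 == 1%N.

Lemma avoids_nil (E : finType) (Z : seq (seq E)) :
  (forall r, r \in Z -> 2 <= size r)%N -> avoids Z [::].
Proof. by move=> Z_long; apply/allP => r /Z_long; case: r. Qed.

Lemma avoids_arrow (E : finType) (Z : seq (seq E)) a :
  (forall r, r \in Z -> 2 <= size r)%N -> avoids Z [:: a].
Proof.
move=> Z_long; apply/allP => r /Z_long; rewrite infixs1.
by case: r => [|? [|? ?]] //= _; rewrite eqseq_cons andbF.
Qed.

Lemma avoids_behead (E : finType) (Z : seq (seq E)) a w :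
  avoids Z (a :: w) -> avoids Z w.
Proof.
move=> /allP aw; apply/allP => r /aw; apply: contraNN => rw.
by rewrite infix_consl rw orbT.
Qed.

Section QuiverLists.
Variables (V E : finType) (s t : E -> V).

Lemma mem_words N w : (w \in words E N) = (size w <= N)%N.
Proof.
elim: N w => [|N IH] w; first by case: w.
rewrite /= in_cons; case: w => [|a w] //=.
apply/allpairsP/idP => [[[b u] [_ /= uN [_ ->]]] | h]; first by rewrite ltnS -IH.
by exists (a, w); rewrite mem_enum IH -ltnS.
Qed.

Lemma uniq_words N : uniq (words E N).
Proof.
elim: N => //= N IH; rewrite allpairs_uniq ?enum_uniq // ?andbT.
  by apply/allpairsP => [[[a w] [_ _]]].
by move=> [a w] [b u] _ _ /= [-> ->].
Qed.

Variables (Q0 : pred V) (Z : seq (seq E)) (N : nat).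
Local Notation basisN := (basis_list s t Q0 Z N).
Local Notation domN := (dom_list s t Q0 Z N).
Local Notation codN := (codom_list s t Q0 Z N).

Lemma mem_basis_list p : (p \in basisN) = basisp s t Q0 Z p && (size p.2 <= N)%N.
Proof.
rewrite mem_filter; case: p => v w /=; congr andb.
apply/allpairsP/idP => [[[b u] [_ /= uN [_ ->]]] | h]; first by rewrite -(mem_words N).
by exists (v, w); rewrite mem_enum mem_words.
Qed.

Lemma uniq_basis_list : uniq basisN.
Proof.
apply: filter_uniq; rewrite allpairs_uniq ?enum_uniq ?uniq_words //.
by move=> [a w] [b u] _ _ /= [-> ->].
Qed.

Lemma mem_dom_list g : (g \in domN) = (g \in basisN) && (tgt t g == src g).
Proof. by rewrite mem_filter andbC. Qed.

Lemma uniq_dom_list : uniq domN.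
Proof. exact: filter_uniq uniq_basis_list. Qed.

Lemma mem_codom_list a p :
  ((a, p) \in codN) = [&& p \in basisN, src p == s a & tgt t p == t a].
Proof.
apply/allpairsPdep/idP => [[b [q [_ /= qin [-> ->]]]] | h].
  by move: qin; rewrite mem_filter andbC.
by exists a, p; rewrite mem_enum mem_filter; case/and3P: h => -> -> ->.
Qed.

Variable k : fieldType.

Lemma coef_neq0 g y : coef s t k g y != 0 ->
  (s y.1 == src g) && (y.2 == (src g, rcons g.2 y.1)) ||
  (t y.1 == src g) && (y.2 == (s y.1, y.1 :: g.2)).
Proof. by rewrite /coef; do 2!case: (_ && _); rewrite ?subrr ?eqxx. Qed.

Lemma size_coef_neq0 g y : coef s t k g y != 0 -> size y.2.2 = (size g.2).+1.
Proof. by move/coef_neq0 => /orP[] /andP[_ /eqP ->] /=; rewrite ?size_rcons. Qed.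

Lemma coef_neq0_nil g y : coef s t k g y != 0 -> y.2.2 != [::].
Proof. by move/size_coef_neq0; rewrite -size_eq0 => ->. Qed.

Definition vertex_block :=
  mx_of (coef s t k) (filter (@trivial_path V E) domN) (filter (@arrow_col V E) codN).
Definition cycle_block :=
  mx_of (coef s t k) (filter (predC (@trivial_path V E)) domN)
                     (filter (predC (@arrow_col V E)) codN).

Lemma dimIm_delta0_blocks :
  dimIm_delta0 s t k Q0 Z N = (\rank vertex_block + \rank cycle_block)%N.
Proof.
apply: (rank_mx_of_block (f := coef s t k)) => g y _ _; apply: contraNeq => nz.
by rewrite /trivial_path /arrow_col (size_coef_neq0 nz) eqSS size_eq0.
Qed.

End QuiverLists.

(** * The vertex block: an incidence matrix *)

Lemma size_filter_enum (T : finType) (A : {pred T}) (P : pred T) :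
  size (filter P (enum A)) = #|[predI A & P]|.
Proof.
rewrite cardE; apply/perm_size/uniq_perm.
- exact: filter_uniq (enum_uniq _).
- exact: enum_uniq.
by move=> x; rewrite mem_filter !mem_enum !inE andbC.
Qed.

Lemma adj_sym (V E : finType) (s t : E -> V) : symmetric (adj s t).
Proof. by move=> u v; apply: eq_existsb => a; exact: orbC. Qed.

Section RootMatrix.
Variables (V : finType) (Q0 : pred V) (k : fieldType).
Local Notation vs := (enum Q0).
Local Notation vj j := (tnth (in_tuple vs) j).

Definition dvec (x y : V) : 'rV[k]_(size vs) :=
  \row_j ((vj j == x)%:R - (vj j == y)%:R).

Lemma dvecxx x : dvec x x = 0.
Proof. by apply/rowP => j; rewrite !mxE subrr. Qed.

Lemma dvec_trans x y z : dvec x z = dvec x y + dvec y z.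
Proof. by apply/rowP => j; rewrite !mxE addrA subrK. Qed.

Lemma dvecC x y : dvec y x = - dvec x y.
Proof. by apply/rowP => j; rewrite !mxE opprB. Qed.

Lemma dvec_connect_sub (e : rel V) m (M : 'M[k]_(m, size vs)) :
  (forall u w, e u w -> (dvec u w <= M)%MS) ->
  forall v w, connect e v w -> (dvec v w <= M)%MS.
Proof.
move=> edge_sub v _ /connectP [p e_p ->].
elim: p v e_p => [|x p IH] v /=; first by rewrite dvecxx sub0mx.
case/andP=> vx px; rewrite (dvec_trans v x).
by apply: addmx_sub; [apply: edge_sub | apply: IH].
Qed.

Variables (e : rel V).
Hypothesis e_sym : connect_sym e.

Definition root_coef (v w : V) : k := (w == v)%:R - (w == fingraph.root e v)%:R.

Lemma row_of_root_coef v : row_of root_coef vs v = dvec v (fingraph.root e v).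
Proof. by apply/rowP => j; rewrite !mxE. Qed.

(* The rows of the roots vanish; the others are independent since a non-root
   [w] has a nonzero entry only in row [w]. *)
Lemma rank_root_mx : \rank (mx_of root_coef vs vs) = #|[predD Q0 & roots e]|.
Proof.
set nr := filter (predC (roots e)) vs.
have nr_vs : {subset nr <= vs} by exact/mem_subseq/filter_subseq.
have nr_root y x : y \in nr -> (y == fingraph.root e x) = false.
  rewrite mem_filter => /andP[ny _]; apply: contraNF ny => /eqP ->.
  exact: roots_root.
rewrite (@rank_mx_of_filter_rows _ _ _ _ (predC (roots e))); last first.
  by move=> x _ /negPn /eqP rx y _; rewrite /root_coef rx subrr.
have -> : #|[predD Q0 & roots e]| = size nr.
  by rewrite size_filter_enum; apply: eq_card => x; rewrite !inE andbC.
apply/eqP; rewrite eqn_leq rank_leq_row /=.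
apply: leq_trans (rank_mx_of_subset_cols _ _ nr_vs).
rewrite rank_mx_of_sparse_cols; last 2 first.
- exact: filter_uniq (enum_uniq _).
- move=> y yn x1 x2 _ _; rewrite /root_coef !nr_root // !subr0.
  by case: (eqVneq y x1) => [<-|_]; case: (eqVneq y x2) => [<-|_]; rewrite ?mulr0n ?eqxx.
rewrite (eq_in_count (a2 := predT)) ?count_predT // => x xn.
by apply/hasP; exists x; rewrite // /root_coef eqxx nr_root // subr0 oner_neq0.
Qed.

End RootMatrix.

Arguments root_coef {V k} e v w.

Section VertexBlock.
Variables (V E : finType) (s t : E -> V) (Q0 : pred V) (Z : seq (seq E)).
Variables (N : nat) (k : fieldType).
Hypothesis arrows_in_Q0 : forall a, (s a \in Q0) && (t a \in Q0).
Hypothesis Z_long : forall r, r \in Z -> (2 <= size r)%N.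
Hypothesis N_gt0 : (0 < N)%N.

Local Notation vs := (enum Q0).
Local Notation dvec := (dvec Q0 k).
Local Notation arrows := (filter (@arrow_col V E) (codom_list s t Q0 Z N)).
Local Notation incidence :=
  (mx_of (fun y v => coef s t k (v, [::]) y) arrows vs).

Lemma rank_vertex_block_incidence :
  \rank (vertex_block s t Q0 Z N k) = \rank incidence.
Proof.
rewrite -[RHS]mxrank_tr trmx_mx_of; apply: rank_mx_of_rows => [[v w] | v].
  rewrite mem_filter mem_dom_list mem_basis_list /trivial_path /= => /andP[/eqP ->].
  by case/andP=> /andP[/andP[/andP[vQ _] _] _] _; right; exists v; rewrite ?mem_enum.
rewrite mem_enum => vQ; right; exists (v, [::]) => //.
rewrite mem_filter mem_dom_list mem_basis_list /basisp /valid /= vQ.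
by rewrite (avoids_nil Z_long) /tgt /= eqxx.
Qed.

Lemma row_incidence_arrow a :
  row_of (fun y v => coef s t k (v, [::]) y) vs (a, (s a, [:: a])) =
  dvec (s a) (t a).
Proof.
apply/rowP => j; rewrite !mxE /coef /= !xpair_eqE !eqxx !andbT andbb.
by rewrite (eq_sym (s a)) (eq_sym (t a)).
Qed.

Lemma arrow_incidence_sub a : (dvec (s a) (t a) <= incidence)%MS.
Proof.
have a_col : (a, (s a, [:: a])) \in arrows.
  rewrite mem_filter mem_codom_list mem_basis_list /basisp /valid /=.
  by rewrite avoids_arrow // eqxx N_gt0 /tgt /= eqxx !andbT; case/andP: (arrows_in_Q0 a).
by rewrite -row_incidence_arrow row_of_sub.
Qed.

Lemma incidence_eqmx_root_mx :
  (incidence == mx_of (root_coef (adj s t)) vs vs)%MS.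
Proof.
have adj_csym := sym_connect_sym (adj_sym s t).
have root_sub v : v \in Q0 ->
    (dvec v (fingraph.root (adj s t) v) <= mx_of (root_coef (adj s t)) vs vs)%MS.
  by move=> vQ; rewrite -row_of_root_coef row_of_sub ?mem_enum.
apply/andP; split; apply/row_subP => i; rewrite row_mx_of; last first.
  rewrite row_of_root_coef; apply: dvec_connect_sub (connect_root _ _) => u w.
  case/existsP=> a /orP[] /andP[/eqP <- /eqP <-]; first exact: arrow_incidence_sub.
  by rewrite dvecC eqmx_opp arrow_incidence_sub.
have := mem_tnth i (in_tuple arrows); case: (tnth _ i) => a [x w].
rewrite mem_filter /arrow_col mem_codom_list => /andP[w1 /and3P[_ /eqP /= -> _]].
case: w w1 => [|b [|? ?]] //= _.
have [-> | nba] := eqVneq b a; last first.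
  suff -> : row_of (fun y v => coef s t k (v, [::]) y) vs (a, (s a, [:: b])) = 0.
    exact: sub0mx.
  apply/rowP => j; rewrite !mxE /coef /= !xpair_eqE !eqseq_cons (negbTE nba).
  by rewrite !andbF subrr.
have root_st : fingraph.root (adj s t) (s a) = fingraph.root (adj s t) (t a).
  apply/eqP; rewrite (root_connect adj_csym) connect1 //.
  by apply/existsP; exists a; rewrite !eqxx.
rewrite row_incidence_arrow (dvec_trans _ _ (s a) (fingraph.root (adj s t) (s a))).
rewrite {2}root_st (dvecC _ _ (t a)).
by case/andP: (arrows_in_Q0 a) => sQ tQ; apply: addmx_sub; rewrite ?eqmx_opp root_sub.
Qed.

Lemma rank_vertex_block :
  (\rank (vertex_block s t Q0 Z N k) + ncomp s t Q0)%N = #|Q0|.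
Proof.
rewrite rank_vertex_block_incidence (eqmx_rank incidence_eqmx_root_mx).
rewrite rank_root_mx; last exact: sym_connect_sym (adj_sym s t).
rewrite -(cardID (roots (adj s t)) Q0) addnC; congr (_ + _)%N.
by apply: eq_card => x; rewrite !inE andbC.
Qed.

End VertexBlock.

(** * Paths of the glued quiver *)

Lemma chain_rcons (V E : finType) (s t : E -> V) x w a :
  chain s t x (rcons w a) = chain s t x w && (s a == last x (map t w)).
Proof. by elim: w x => [|b w IH] x /=; rewrite ?andbT // IH andbA. Qed.

Lemma chain_infix2 (V E : finType) (s t : E -> V) x w c b :
  chain s t x w -> infix [:: c; b] w -> t c = s b.
Proof.
elim: w x => [|a w IH] x //= /andP[_ cw] /orP[|]; last exact: IH cw.
case: w cw {IH} => [|b' w] /=; first by rewrite andbF.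
by move=> /andP[/eqP sb _] /andP[/eqP -> /andP[/eqP -> _]].
Qed.

Lemma basis_list_chain (V E : finType) (s t : E -> V) Q0 Z N p :
  p \in basis_list s t Q0 Z N -> chain s t p.1 p.2.
Proof. by rewrite mem_basis_list => /andP[/andP[/andP[_ ->]]]. Qed.

Section GluedPaths.
Variables (V E : finType) (s t : E -> V) (Z : seq (seq E)) (v1 vn : V).
Hypothesis v1_neq_vn : v1 != vn.
Local Notation glue := (glue v1 vn).
Local Notation sB := (sB s v1 vn).
Local Notation tB := (tB t v1 vn).
Local Notation ZB := (ZB s t Z v1 vn).

Lemma glue_v1 : glue v1 = v1. Proof. by rewrite /glue (negbTE v1_neq_vn). Qed.
Lemma glue_vn : glue vn = v1. Proof. by rewrite /glue eqxx. Qed.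
Lemma glue_id x : x != vn -> glue x = x. Proof. by rewrite /glue => /negbTE ->. Qed.
Lemma glue_neq_vn x : glue x != vn. Proof. by rewrite /glue; case: (eqVneq x vn). Qed.

Lemma glue_eq x y :
  glue x = glue y -> x = y \/ (x \in [:: v1; vn]) && (y \in [:: v1; vn]).
Proof.
rewrite /glue; case: (eqVneq x vn) => [->|_]; case: (eqVneq y vn) => [->|_];
  by [left | move=> e; right; rewrite !inE e !eqxx ?orbT].
Qed.

Lemma chain_glue x w : chain s t x w -> chain sB tB (glue x) w.
Proof.
elim: w x => //= a w IH x /andP[/eqP sa cw].
by rewrite /sB sa eqxx IH.
Qed.

Lemma tgt_glue x w : tgt tB (glue x, w) = glue (tgt t (x, w)).
Proof. by rewrite /tgt /= /tB (map_comp glue t) last_map. Qed.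

Lemma avoids_ZB x w : chain s t x w -> avoids Z w -> avoids ZB w.
Proof.
move=> cw aw; rewrite /avoids /ZB all_cat; apply/andP; split; first exact: aw.
apply/allP => r /allpairsPdep [c [b [_]]]; rewrite mem_filter => /andP[/andP[_ ne] _] ->.
by apply: contra_neqN ne => /(chain_infix2 cw) ->.
Qed.

Lemma basis_list_glue N p : p \in basis_list s t (@Q0A V) Z N ->
  (glue p.1, p.2) \in basis_list sB tB (Q0B vn) ZB N.
Proof.
case: p => x w; rewrite !mem_basis_list /basisp /valid.
move=> /andP[/andP[/andP[_ cw] aw] ->] /=.
by rewrite (avoids_ZB cw aw) chain_glue // inE glue_neq_vn.
Qed.

(* [v1] is a dummy value for the empty word. *)
Definition wsrc (w : seq E) : V := if w is a :: _ then s a else v1.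
Definition wtgt (w : seq E) : V := tgt t (wsrc w, w).

Lemma chain_wsrc x w : chain s t x w -> w != [::] -> x = wsrc w.
Proof. by case: w => //= a w /andP[/eqP]. Qed.

Lemma tgt_wtgt x w : w != [::] -> tgt t (x, w) = wtgt w.
Proof. by case: w. Qed.

Lemma wtgt_last w x : w != [::] -> wtgt w = t (last x w).
Proof. by case: w => // b w _; rewrite /wtgt /tgt /= last_map. Qed.

Lemma wsrc_rcons w a : w != [::] -> wsrc (rcons w a) = wsrc w.
Proof. by case: w. Qed.

(* A path of [B] avoids the relations [b^* c^*] and hence never passes
   between [v1] and [vn] at the glued vertex. *)
Lemma chain_unglue v w : chain sB tB v w -> avoids ZB w ->
  chain s t (wsrc w) w /\ (w != [::] -> v = glue (wsrc w)).
Proof.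
elim: w v => [|a w IH] v //= /andP[/eqP sa cw] aw.
have [cw' _] := IH _ cw (avoids_behead aw).
split=> [|_]; last by rewrite -sa.
rewrite eqxx /=; case: w cw aw cw' {IH} => [|b w] //= /andP[/eqP ab _] aw cw'.
suff -> : t a = s b by [].
have [// | /andP[ta sb]] := glue_eq ab.
apply/eqP; apply: contraT => ne.
have abZ : [:: a; b] \in ZB.
  rewrite mem_cat; apply/orP; right; apply/allpairsPdep; exists a, b.
  by rewrite mem_enum mem_filter mem_enum ta sb ne.
by move/allP: aw => /(_ _ abZ) /negP; case; exact: prefix_infix [:: a; b] w.
Qed.

Lemma basis_list_unglue N v w :
  (v, w) \in basis_list sB tB (Q0B vn) ZB N -> w != [::] ->
  v = glue (wsrc w) /\ (wsrc w, w) \in basis_list s t (@Q0A V) Z N.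
Proof.
rewrite !mem_basis_list /basisp /valid => /andP[/andP[/andP[_ cw] aw] ->] wn.
have [cw' ev] := chain_unglue cw aw; split; first exact: ev.
by rewrite /= cw' /=; move: aw; rewrite /avoids /ZB all_cat => /andP[->].
Qed.

End GluedPaths.

(** * The cycle block under gluing *)

Section CycleBlock.
Variables (V E : finType) (s t : E -> V) (Z : seq (seq E)) (v1 vn : V).
Variables (N : nat) (k : fieldType).
Hypothesis v1_neq_vn : v1 != vn.
Local Notation glue := (glue v1 vn).
Local Notation sB := (sB s v1 vn).
Local Notation tB := (tB t v1 vn).
Local Notation ZB := (ZB s t Z v1 vn).
Local Notation wsrc := (wsrc s v1).
Local Notation wtgt := (wtgt s t v1).
Local Notation basisA := (basis_list s t (@Q0A V) Z N).
Local Notation coefA := (coef s t k).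
Local Notation coefB := (coef sB tB k).
Local Notation codB := (codom_list sB tB (Q0B vn) ZB N).
Local Notation rA :=
  (filter (predC (@trivial_path V E)) (dom_list s t (@Q0A V) Z N)).
Local Notation cA :=
  (filter (predC (@arrow_col V E)) (codom_list s t (@Q0A V) Z N)).
Local Notation rB :=
  (filter (predC (@trivial_path V E)) (dom_list sB tB (Q0B vn) ZB N)).
Local Notation cB := (filter (predC (@arrow_col V E)) codB).

Lemma mem_cycleB v w : (v, w) \in rB ->
  [/\ w != [::], v = glue (wsrc w), (wsrc w, w) \in basisA &
      glue (wsrc w) = glue (wtgt w)].
Proof.
rewrite mem_filter mem_dom_list /trivial_path /= => /andP[wn /andP[bB /eqP tg]].
have [ev bA] := basis_list_unglue bB wn; split=> //.
by move: tg; rewrite /src /= ev tgt_glue (tgt_wtgt s _ v1).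
Qed.

Lemma mem_colB a z q : (a, (z, q)) \in codB -> q != [::] ->
  z = glue (wsrc q) /\ (wsrc q, q) \in basisA.
Proof. by rewrite mem_codom_list => /and3P[bB _ _]; exact: basis_list_unglue. Qed.

(* The cycles f_1||p^* of [B] with [p] a path of [A] between [v1] and [vn]. *)
Definition new_cycle (g : V * seq E) : bool := wsrc g.2 != wtgt g.2.
Definition new_col (y : E * (V * seq E)) : bool :=
  has (fun g => new_cycle g && (coefB g y != 0)) rB.

(* If [q] is both [g] followed by [a] and [a] followed by [g'], then [g'] lifts
   to a cycle of [A]; so a column meeting a new cycle meets no other row. *)
Lemma coefB_new_cycle_unique g g' y : g \in rB -> g' \in rB -> y \in codB ->
  coefB g y != 0 -> coefB g' y != 0 -> new_cycle g' -> g = g'.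
Proof.
case: g g' y => v w [v' w'] [a [z q]] /mem_cycleB [wn -> _ _].
move=> /mem_cycleB [wn' -> _ _] yB nz nz'; rewrite /new_cycle /= => new'.
suff -> : w = w' by [].
have [_ /basis_list_chain /= cq] := mem_colB yB (coef_neq0_nil nz).
case/orP: (coef_neq0 nz) => /andP[_ /eqP [_ eq]];
  case/orP: (coef_neq0 nz') => /andP[_ /eqP [_ eq']] /=.
- by move: eq'; rewrite eq => /rcons_inj [].
- move: cq new'; rewrite eq' /= eqxx /= => /(chain_wsrc v1) /(_ wn') <-.
  rewrite (wtgt_last _ _ _ a wn') -[last a w']/(last a (a :: w')) -eq' eq.
  by rewrite last_rcons eqxx.
- move: cq new'; rewrite eq' chain_rcons wsrc_rcons // => /andP[_ /eqP sa].
  rewrite /wtgt /tgt -sa; move: eq; rewrite eq'.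
  by case: (w') wn' => //= b u _ [->]; rewrite eqxx.
- by move: eq'; rewrite eq => [[]].
Qed.

Definition glue_path (p : V * seq E) : V * seq E := (glue p.1, p.2).
Definition glue_col (y : E * (V * seq E)) : E * (V * seq E) := (y.1, glue_path y.2).

Lemma old_cyclesB : filter (predC new_cycle) rB =i map glue_path rA.
Proof.
move=> [v w]; apply/idP/mapP => [|[[x u] xA [-> ->]]].
  rewrite mem_filter /= /new_cycle negbK => /andP[/eqP old /mem_cycleB [wn -> bA _]].
  exists (wsrc w, w) => //.
  by rewrite mem_filter mem_dom_list /trivial_path /= wn bA /=; apply/eqP.
move: xA; rewrite mem_filter mem_dom_list /trivial_path /= => /andP[un /andP[bA /eqP tg]].
have xu := chain_wsrc v1 (basis_list_chain bA) un.
rewrite mem_filter /= /new_cycle negbK mem_filter mem_dom_list /trivial_path /= un.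
rewrite (basis_list_glue v1_neq_vn bA) /= tgt_glue tg eqxx /=.
by move: xu => /= xu; rewrite andbT /wtgt -xu tg.
Qed.

Lemma old_cycle_col_parallel v w a z q : (v, w) \in rB -> ~~ new_cycle (v, w) ->
  (a, (z, q)) \in codB -> coefB (v, w) (a, (z, q)) != 0 ->
  s a = wsrc q /\ t a = wtgt q.
Proof.
move=> /mem_cycleB [wn _ /basis_list_chain /= cw _]; rewrite /new_cycle negbK /=.
move=> /eqP old yB nz; have qn := coef_neq0_nil nz.
have [_ /basis_list_chain /= cq] := mem_colB yB qn.
case/orP: (coef_neq0 nz) => /andP[_ /eqP [_ eq]].
- move: cq; rewrite eq chain_rcons wsrc_rcons // => /andP[_ /eqP sa].
  split; first by rewrite sa.
  by rewrite (wtgt_last _ _ _ a) ?last_rcons // -size_eq0 size_rcons.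
- rewrite eq; split=> //; move: cq; rewrite eq /= eqxx /= => /(chain_wsrc v1) /(_ wn).
  by rewrite (wtgt_last _ _ _ a) // -(wtgt_last s t v1 a wn) -old => <-.
Qed.

Lemma old_cycle_col_unglue g a z q : g \in rB -> ~~ new_cycle g ->
  (a, (z, q)) \in cB -> coefB g (a, (z, q)) != 0 ->
  (a, (wsrc q, q)) \in cA /\ glue_col (a, (wsrc q, q)) = (a, (z, q)).
Proof.
case: g => v w gB old; rewrite mem_filter => /andP[long yB] nz.
have [sa ta] := old_cycle_col_parallel gB old yB nz.
have [ez bq] := mem_colB yB (coef_neq0_nil nz).
split; last by rewrite /glue_col /glue_path /= -ez.
rewrite mem_filter; apply/andP; split; first exact: long.
rewrite mem_codom_list bq /src /= sa eqxx /=.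
by rewrite (tgt_wtgt s _ v1) ?(coef_neq0_nil nz) // ta.
Qed.

Lemma glue_col_mem y : y \in cA -> glue_col y \in cB.
Proof.
case: y => a [x w]; rewrite !mem_filter /= => /andP[-> ]; rewrite !mem_codom_list.
move=> /and3P[bA /eqP xa /eqP ta]; rewrite /src /= in xa.
by rewrite (basis_list_glue v1_neq_vn bA) tgt_glue ta /src /= xa !eqxx.
Qed.

Lemma coef_glue x y : x \in rA -> y \in cA ->
  coefA x y = coefB (glue_path x) (glue_col y).
Proof.
case: x => x w; case: y => a [z u].
rewrite mem_filter mem_dom_list /trivial_path /= => /andP[wn /andP[bAx /eqP tg]].
rewrite mem_filter mem_codom_list => /andP[_ /and3P[bAu /eqP za /eqP ta]].
rewrite /src /= in za tg.
have xw := chain_wsrc v1 (basis_list_chain bAx) wn; rewrite /= in xw.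
have cu := basis_list_chain bAu; rewrite /= in cu.
rewrite /coef /glue_path /glue_col /sB /tB /=; congr (_%:R - _%:R).
- have [eu | nu] := eqVneq u (rcons w a); last by rewrite !xpair_eqE (negbTE nu) !andbF.
  have un : u != [::] by rewrite eu -size_eq0 size_rcons.
  have zu := chain_wsrc v1 cu un; rewrite eu wsrc_rcons // -xw in zu.
  by rewrite -za zu eu /glue_path /= !eqxx.
- have [eu | nu] := eqVneq u (a :: w); last by rewrite !xpair_eqE (negbTE nu) !andbF.
  move: cu; rewrite eu /= => /andP[_ /(chain_wsrc v1) /(_ wn) ta'].
  by rewrite ta' -xw za /glue_path /= !eqxx.
Qed.

Definition joins_ends (p : V * seq E) : bool :=
  ((src p == v1) && (tgt t p == vn)) || ((src p == vn) && (tgt t p == v1)).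

Lemma joins_ends_new_cycle p : p \in filter joins_ends basisA ->
  [/\ p.2 != [::], p.1 = wsrc p.2, (v1, p.2) \in rB & new_cycle (v1, p.2)].
Proof.
case: p => x w; rewrite mem_filter /joins_ends /src /= => /andP[ends bA].
have x_tgt : x != tgt t (x, w).
  by case/orP: ends => /andP[/eqP -> /eqP ->]; rewrite // eq_sym.
have wn : w != [::] by apply: contraNneq x_tgt => ->.
have xw := chain_wsrc v1 (basis_list_chain bA) wn; rewrite /= in xw.
have [glx glt] : glue x = v1 /\ glue (tgt t (x, w)) = v1.
  by case/orP: ends => /andP[/eqP -> /eqP ->]; rewrite ?(glue_v1 v1_neq_vn) ?glue_vn.
split=> //; last by rewrite /new_cycle /= -xw -(tgt_wtgt s _ v1 x wn).
rewrite mem_filter mem_dom_list /trivial_path /= wn.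
have := basis_list_glue v1_neq_vn bA; rewrite /= glx => -> /=.
by rewrite -[X in tgt _ (X, _)]glx tgt_glue glt.
Qed.

Lemma new_cyclesB :
  perm_eq (filter new_cycle rB) [seq (v1, p.2) | p <- filter joins_ends basisA].
Proof.
apply: uniq_perm.
- exact/filter_uniq/filter_uniq/uniq_dom_list.
- rewrite map_inj_in_uniq; first exact/filter_uniq/uniq_basis_list.
  move=> p p' pE p'E [e].
  have [_ e1 _ _] := joins_ends_new_cycle pE.
  have [_ e1' _ _] := joins_ends_new_cycle p'E.
  by case: p p' e1 e1' e {pE p'E} => x w [x' w'] /= -> -> ->.
move=> [v w]; apply/idP/mapP => [|[p pE [-> ->]]]; last first.
  by have [_ _ gB new] := joins_ends_new_cycle pE; rewrite mem_filter new gB.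
rewrite mem_filter => /andP[new /mem_cycleB [wn -> bA glue_st]].
have [/eqP | /andP[l1 l2]] := glue_eq glue_st; first by rewrite (negbTE new).
have glv : glue (wsrc w) = v1.
  by move: l1; rewrite !inE => /orP[] /eqP ->; rewrite ?(glue_v1 v1_neq_vn) ?glue_vn.
exists (wsrc w, w); last by rewrite glv.
rewrite mem_filter bA andbT /joins_ends /src /= (tgt_wtgt s _ v1) //.
move: new l1 l2; rewrite /new_cycle !inE.
by move=> ne /orP[] /eqP e1 /orP[] /eqP e2; move: ne; rewrite e1 e2 !eqxx /= ?orbT.
Qed.

Lemma count_new_cycles :
  count (fun g => has (fun y => coefB g y != 0) (filter new_col cB))
        (filter new_cycle rB) = sp s t Z v1 vn k N.
Proof.
have -> : sp s t Z v1 vn k N =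
    count (fun p => has (fun y => coefB (v1, p.2) y != 0) codB)
          (filter joins_ends basisA).
  rewrite /sp count_filter; apply: eq_in_count => p pA /=.
  by move: (pA); rewrite /special mem_basis_list => /andP[-> _]; rewrite andbC.
rewrite (permP new_cyclesB) count_map; apply: eq_in_count => p pE /=.
have [wn _ gB new] := joins_ends_new_cycle pE.
apply/hasP/hasP => [[y] | [y yB nz]].
  by rewrite !mem_filter => /andP[_ /andP[_ yB]] nz; exists y.
exists y => //; rewrite mem_filter; apply/andP; split.
  by apply/hasP; exists (v1, p.2) => //; rewrite new nz.
rewrite mem_filter yB andbT /= /arrow_col (size_coef_neq0 nz).
by move: wn; case: (p.2).
Qed.

Lemma coefB_new_block g y : g \in rB -> y \in cB ->
  new_cycle g != new_col y -> coefB g y = 0.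
Proof.
move=> gB yc; apply: contraNeq => nz; rewrite eq_sym.
have [new | old] := boolP (new_cycle g).
  by rewrite eqb_id; apply/hasP; exists g; rewrite ?new.
rewrite eqbF_neg; apply/hasP => -[g' g'B /andP[new' nz']].
have yB : y \in codB by move: yc; rewrite mem_filter => /andP[].
by move: old; rewrite (coefB_new_cycle_unique gB g'B yB nz nz' new') new'.
Qed.

Lemma rank_new_block :
  \rank (mx_of coefB (filter new_cycle rB) (filter new_col cB)) = sp s t Z v1 vn k N.
Proof.
rewrite rank_mx_of_sparse_cols ?count_new_cycles //.
  exact/filter_uniq/filter_uniq/uniq_dom_list.
move=> y; rewrite mem_filter => /andP[_ yc] x1 x2 x1r x2r nz1 nz2.
have yB : y \in codB by move: yc; rewrite mem_filter => /andP[].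
move: x1r x2r; rewrite !(mem_filter new_cycle) => /andP[_ x1B] /andP[new2 x2B].
exact: coefB_new_cycle_unique x1B x2B yB nz1 nz2 new2.
Qed.

Lemma rank_old_block :
  \rank (mx_of coefB (filter (predC new_cycle) rB) (filter (predC new_col) cB)) =
  \rank (cycle_block s t (@Q0A V) Z N k).
Proof.
set R := filter (predC new_cycle) rB.
have R_rB : {subset R <= rB} by exact/mem_subseq/filter_subseq.
rewrite -rank_mx_of_filter_cols; last first.
  move=> y yc /negPn new_y g /[dup] /R_rB gB; rewrite mem_filter => /andP[old _].
  by apply: coefB_new_block; rewrite // (negbTE old) new_y.
have -> : \rank (mx_of coefB R cB) = \rank (mx_of coefB R (map glue_col cA)).
  apply: rank_mx_of_cols => [y yc | _ /mapP [y0 y0A ->]]; last first.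
    by right; exists (glue_col y0); rewrite ?glue_col_mem.
  have [/hasP [g gR nz] | /hasPn f0] := boolP (has (fun g => coefB g y != 0) R).
    right; move: gR nz; rewrite mem_filter => /andP[old gB].
    case: y yc => a [z q] yc nz; have [yA <-] := old_cycle_col_unglue gB old yc nz.
    by exists (glue_col (a, (wsrc q, q))); rewrite ?map_f.
  by left=> g /f0 /negbNE /eqP.
have -> : \rank (mx_of coefB R (map glue_col cA)) =
    \rank (mx_of (fun x y => coefB (glue_path x) y) rA (map glue_col cA)).
  apply: rank_mx_of_rows => [g | x xA].
    by rewrite old_cyclesB => /mapP [x xA ->]; right; exists x.
  by right; exists (glue_path x); rewrite ?old_cyclesB ?map_f.
apply: rank_mx_of_cols => [_ /mapP [y yA ->] | y yA]; right.
  by exists y => // x xA; rewrite coef_glue.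
by exists (glue_col y); rewrite ?map_f // => x xA; rewrite coef_glue.
Qed.

Lemma rank_cycle_block_glue :
  \rank (cycle_block sB tB (Q0B vn) ZB N k) =
  (sp s t Z v1 vn k N + \rank (cycle_block s t (@Q0A V) Z N k))%N.
Proof.
rewrite /cycle_block (rank_mx_of_block (P := new_cycle) (Q := new_col)).
  by rewrite rank_new_block rank_old_block.
exact: coefB_new_block.
Qed.

End CycleBlock.

(** * Connected components under gluing *)

Lemma chain_connect (V E : finType) (s t : E -> V) x w :
  chain s t x w -> connect (adj s t) x (tgt t (x, w)).
Proof.
elim: w x => [|a w IH] x //= /andP[/eqP sa cw].
apply: connect_trans (IH _ cw); apply: connect1; apply/existsP; exists a.
by rewrite sa !eqxx.
Qed.

Section GluedComponents.
Variables (V E : finType) (s t : E -> V) (v1 vn : V).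
Hypothesis v1_neq_vn : v1 != vn.
Local Notation glue := (glue v1 vn).
Local Notation adjA := (adj s t).
Local Notation adjB := (adj (sB s v1 vn) (tB t v1 vn)).
Let symA : connect_sym adjA := sym_connect_sym (adj_sym s t).
Let symB : connect_sym adjB := sym_connect_sym (adj_sym _ _).

Lemma connect_glue u w : connect adjA u w -> connect adjB (glue u) (glue w).
Proof.
move=> /connectP [p pp ->]; elim: p u pp => [|x p IH] u //= /andP[ux px].
apply: connect_trans (IH _ px); apply: connect1.
case/existsP: ux => a uxa; apply/existsP; exists a; rewrite /sB /tB.
by case/orP: uxa => /andP[/eqP -> /eqP ->]; rewrite !eqxx ?orbT.
Qed.

Lemma adjB_unglue u w : adjB u w ->
  exists2 u', glue u' = u & exists2 w', glue w' = w & adjA u' w'.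
Proof.
case/existsP=> a /orP[] /andP[/eqP <- /eqP <-];
  [exists (s a) => //; exists (t a) | exists (t a) => //; exists (s a)] => //;
  by apply/existsP; exists a; rewrite !eqxx ?orbT.
Qed.

Definition near_ends (x : V) : bool := connect adjA x v1 || connect adjA x vn.

Lemma near_ends_glue x : near_ends (glue x) = near_ends x.
Proof. by rewrite /glue; case: eqP => // ->; rewrite /near_ends !connect0 orbT. Qed.

Lemma near_ends_adj u w : adjA u w -> near_ends u -> near_ends w.
Proof.
move=> uw /orP[] uv; apply/orP; [left | right]; apply: connect_trans uv;
  by apply: connect1; rewrite adj_sym.
Qed.

Lemma near_ends_closedB : closed adjB near_ends.
Proof.
have near_adjB u w : adjB u w -> near_ends u -> near_ends w.
  by case/adjB_unglue=> u' <- [w' <- uw']; rewrite !near_ends_glue; apply: near_ends_adj.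
by move=> u w uw; apply/idP/idP; apply: near_adjB; rewrite // adj_sym.
Qed.

Lemma vn_isolatedB : closed adjB (predC1 vn).
Proof.
have adj_neq_vn u w : adjB u w -> w != vn.
  by case/adjB_unglue=> u' _ [w' <- _]; exact: glue_neq_vn.
move=> u w uw; rewrite !inE (adj_neq_vn _ _ uw) (adj_neq_vn w u) //.
by rewrite adj_sym.
Qed.

Lemma connectB_v1 x : x != vn -> connect adjB v1 x = near_ends x.
Proof.
move=> xn; apply/idP/idP => [/(closed_connect near_ends_closedB) e |].
  have : v1 \in near_ends by rewrite unfold_in /near_ends connect0.
  by rewrite e.
rewrite /near_ends => /orP[] xv; rewrite symA in xv.
  by have := connect_glue xv; rewrite (glue_v1 v1_neq_vn) (glue_id v1 xn).
by have := connect_glue xv; rewrite glue_vn (glue_id v1 xn).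
Qed.

Lemma connectB_far x : ~~ near_ends x -> connect adjA x =1 connect adjB x.
Proof.
move=> far_x.
have far y : connect adjA x y -> ~~ near_ends y.
  move=> xy; apply: contra far_x => /orP[] yv; apply/orP; [left | right];
  exact: connect_trans xy yv.
have glue_far y : ~~ near_ends y -> glue y = y.
  move=> fy; apply: glue_id; apply: contraNneq fy => ->.
  by rewrite /near_ends connect0 orbT.
move=> y; apply/idP/idP => [xy | ].
  by have := connect_glue xy; rewrite !glue_far ?far.
suff /closed_connect cl : closed adjB (connect adjA x).
  by move/cl; rewrite !inE connect0 => /esym.
have unglue z u : glue z = u -> connect adjA x u -> z = u.
  by move=> <- xu; rewrite glue_far //; rewrite -near_ends_glue; exact: far.
have step u w : adjB u w -> connect adjA x u -> connect adjA x w.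
  case/adjB_unglue=> u' gu [w' <- uw'] xu.
  have eu := unglue _ _ gu xu; rewrite -eu in xu.
  have xw' : connect adjA x w' := connect_trans xu (connect1 uw').
  by rewrite glue_far ?far.
by move=> u w uw; apply/idP/idP; apply: step; rewrite // adj_sym.
Qed.

Lemma roots_glue_far x : ~~ near_ends x -> roots adjB x = roots adjA x.
Proof.
by move=> far_x; rewrite /roots /fingraph.root (eq_pick (connectB_far far_x)).
Qed.

Lemma ncompA_near :
  #|[predI [predI roots adjA & @Q0A V] & near_ends]| = (~~ connect adjA v1 vn).+1.
Proof.
rewrite -(n_comp_closure2 symA); apply: eq_card => x; rewrite !inE andbT.
congr (_ && _); apply/idP/pred0Pn => [/orP[] xv | [y /andP[xy /pred2P [] e]]].
- by exists v1; rewrite !inE xv eqxx.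
- by exists vn; rewrite !inE xv eqxx orbT.
- by apply/orP; left; rewrite -e.
- by apply/orP; right; rewrite -e.
Qed.

Lemma ncompB_near : #|[predI [predI roots adjB & Q0B vn] & near_ends]| = 1%N.
Proof.
rewrite -(n_comp_connect symB v1); apply: eq_card => x; rewrite !inE.
have [-> | xn] := eqVneq x vn; last by rewrite andbT connectB_v1.
rewrite andbF; apply/esym/negP => /andP[_ v1vn].
by have := closed_connect vn_isolatedB v1vn; rewrite !inE v1_neq_vn eqxx.
Qed.

Lemma ncomp_glue :
  ncomp s t (@Q0A V) = (ncomp (sB s v1 vn) (tB t v1 vn) (Q0B vn) +
                        ~~ connect adjA v1 vn)%N.
Proof.
rewrite /ncomp /n_comp_mem -(cardID near_ends) -[in RHS](cardID near_ends).
rewrite ncompA_near ncompB_near.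
set DA := #|[predD _ & near_ends]|; set DB := #|[predD _ & near_ends]|.
suff -> : DA = DB by rewrite addSn add1n addnC.
apply: eq_card => x; rewrite !inE andbT.
have [// | far_x] := boolP (x \in near_ends).
suff -> : x != vn by rewrite /= roots_glue_far // andbT.
by apply: contraNneq far_x => ->; rewrite unfold_in /near_ends connect0 orbT.
Qed.

End GluedComponents.

Lemma bounded_gt0 (V E : finType) (s t : E -> V) (Z : seq (seq E)) N (a : E) :
  (forall r, r \in Z -> 2 <= size r)%N -> bounded s t (@Q0A V) Z N -> (0 < N)%N.
Proof.
move=> Z_long bnd; rewrite lt0n; apply/eqP => N0.
have := bnd (s a, [:: a]); rewrite /valid /= eqxx N0 => /(_ isT isT).
by rewrite avoids_arrow.
Qed.

Lemma sp_eq0 (k : fieldType) (V E : finType) (s t : E -> V) Z (v1 vn : V) N :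
  ~~ connect (adj s t) v1 vn -> sp s t Z v1 vn k N = 0%N.
Proof.
move=> disc; rewrite /sp (eq_in_count (a2 := pred0)) ?count_pred0 // => -[x w] pB /=.
apply/negP => /andP[/andP[_ ends] _]; have := chain_connect (basis_list_chain pB).
rewrite /src /= in ends; case/orP: ends => /andP[/eqP -> /eqP ->] conn.
  by rewrite conn in disc.
by rewrite (sym_connect_sym (adj_sym s t)) conn in disc.
Qed.

Theorem proposition3p9 (k : fieldType) (V E : finType) (s t : E -> V)
    (Z : seq (seq E)) (v1 vn : V) (N : nat) :
  monomial_relations s t Z ->
  bounded s t (@Q0A V) Z N ->
  v1 != vn -> non_isolated s t v1 -> non_isolated s t vn ->
  let dA := dimIm_delta0 s t k (@Q0A V) Z N in
  let dB := dimIm_delta0 (sB s v1 vn) (tB t v1 vn) k (Q0B vn)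
              (ZB s t Z v1 vn) N in
  let cA := ncomp s t (@Q0A V) in
  let cB := ncomp (sB s v1 vn) (tB t v1 vn) (Q0B vn) in
  let spn := sp s t Z v1 vn k N in
  [/\ (dA%:Z = dB%:Z + 1 + cB%:Z - cA%:Z - spn%:Z)%R,
      connect (adj s t) v1 vn -> (dA%:Z = dB%:Z + 1 - spn%:Z)%R
    & ~~ connect (adj s t) v1 vn -> dA = dB].
Proof.
move=> [Z_rel _] bnd v1n [a _] _ dA dB cA cB spn.
have Z_long r : r \in Z -> (2 <= size r)%N by case/Z_rel.
have ZB_long r : r \in ZB s t Z v1 vn -> (2 <= size r)%N.
  by rewrite mem_cat => /orP[/Z_long // | /allpairsPdep [c [b [_ _ ->]]]].
have N_gt0 := bounded_gt0 a Z_long bnd.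
have arrowsB a' : (sB s v1 vn a' \in Q0B vn) && (tB t v1 vn a' \in Q0B vn).
  by rewrite !inE !glue_neq_vn.
have vertA := @rank_vertex_block _ _ s t (@Q0A V) Z N k (fun _ => isT) Z_long N_gt0.
have vertB := rank_vertex_block k arrowsB ZB_long N_gt0.
have cycle := rank_cycle_block_glue s t Z N k v1n.
have comp : cA = (cB + ~~ connect (adj s t) v1 vn)%N := ncomp_glue s t v1n.
have eA : dA = _ := dimIm_delta0_blocks s t (@Q0A V) Z N k.
have eB : dB = _ :=
  dimIm_delta0_blocks (sB s v1 vn) (tB t v1 vn) (Q0B vn) (ZB s t Z v1 vn) N k.
have cardA : #|@Q0A V| = #|V| by apply: eq_card.
have cardB : #|Q0B vn|.+1 = #|V| by rewrite cardC1 prednK //; apply/card_gt0P; exists v1.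
split=> [|conn|disc]; [| rewrite conn in comp | rewrite disc in comp]; try lia.
by have := sp_eq0 k Z N disc; lia.
Qed.
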